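(* Let $q=2^\ell$, $r\in[q-1]$, and $0\le a,b\le q-1$. The monomial $x^ay^b$ is $(\Phi,q-r)^*$-good if and only if for all integers $i,j\ge0$ with $i\le_2 b$ and $j\le_2 b-i$ we have $(2i+j+a)\ \mathrm{mod}^*\ q< q-r$.
   Context: $\Phi$ is the set of all polynomials $\phi(x)=\alpha x^2+\beta x+\gamma$ with $\alpha,\beta,\gamma\in\mathbb F_q$. For $f\in\mathbb F_q[x,y]$ and $\phi\in\Phi$, $f|_\phi$ denotes the reduction of $f(x,\phi(x))$ modulo $x^q-x$ (a polynomial of degree $\le q-1$). A polynomial (in particular a monomial) $f$ is $(\Phi,q-r)^*$-good if $\deg f|_\phi<q-r$ for all $\phi\in\Phi$, and bad otherwise. For nonnegative integers $a,b$ with binary digits $a_1,a_2,\dots$ and $b_1,b_2,\dots$, $a\le_2 b$ means $a_i\le b_i$ for all $i$. For $a\ge0$: $a\ \mathrm{mod}^*\ q=a$ if $a\le q-1$; $=q-1$ if $a\ne0$ and $(q-1)\mid a$; otherwise $a\bmod (q-1)$. *)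

From HB Require Import structures.
From mathcomp Require Import all_boot all_order all_algebra all_field.
Set Implicit Arguments. Unset Strict Implicit. Unset Printing Implicit Defensive.
Import GRing.Theory.
Local Open Scope ring_scope.

Definition phiPoly (F : fieldType) (alpha beta gamma : F) : {poly F} :=
  alpha%:P * 'X^2 + beta%:P * 'X + gamma%:P.

(* (x^a y^b)|_phi : reduction of x^a phi(x)^b modulo x^q - x *)
Definition restrict_mono (F : fieldType) (q a b : nat) (phi : {poly F}) : {poly F} :=
  ('X^a * phi ^+ b) %% ('X^q - 'X).

(* deg f|_phi < q - r for all phi in Phi (with deg 0 = -oo);
   deg p < n  <->  size p <= n  *)
Definition mono_good (F : fieldType) (q r a b : nat) : Prop :=
  forall alpha beta gamma : F,
    (size (restrict_mono q a b (phiPoly alpha beta gamma)) <= q - r)%N.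

Definition le2 (a b : nat) : Prop :=
  forall k : nat, ((a %/ 2 ^ k) %% 2 <= (b %/ 2 ^ k) %% 2)%N.

Definition modstar (a q : nat) : nat :=
  if (a <= q - 1)%N then a
  else if (a != 0)%N && (q - 1 %| a)%N then (q - 1)%N
  else (a %% (q - 1))%N.

(* In characteristic 2 squaring is additive, so writing [b] in binary,
   phi^b = prod_k (alpha^(2^k) x^(2^(k+1)) + beta^(2^k) x^(2^k) + gamma^(2^k))^(b_k),
   which expands into the sum over all binary splittings [b = i + j + (b - i - j)] of
   alpha^i beta^j gamma^(b-i-j) x^(2i+j), without any cancellation. Reducing modulo
   x^q - x turns x^m into x^(m mod* q). Hence every restriction has degree below
   q - r when all these exponents do; conversely, for gamma = 1 the coefficient of
   x^d is a polynomial in (alpha, beta) of degree < q in each variable whose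
   coefficients are 0 or 1, and it vanishes on all of F^2 only if it is zero. *)

From HB Require Import structures.
From mathcomp Require Import all_boot all_order all_algebra all_field.
From mathcomp Require Import zify ring.
Set Implicit Arguments. Unset Strict Implicit. Unset Printing Implicit Defensive.

Lemma le2_odd_half x y : le2 x y <-> odd x <= odd y /\ le2 x./2 y./2.
Proof.
split=> [le_xy | [le_odd le_half] [|k]].
- split=> [|k]; first by have := le_xy 0; rewrite !expn0 !divn1 !modn2.
  by have := le_xy k.+1; rewrite expnS !divnMA !divn2.
- by rewrite !expn0 !divn1 !modn2.
- by rewrite expnS !divnMA !divn2.
Qed.

Lemma le2_leq i b : le2 i b -> i <= b.
Proof.
elim/ltn_ind: i b => i IH b /le2_odd_half [le_odd le_half].
case: (posnP i) => [-> // | i_gt0].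
have half_lt : i./2 < i by rewrite ltn_half_double -muln2; lia.
have := IH _ half_lt _ le_half.
move: le_odd (odd_double_half i) (odd_double_half b); rewrite -!muln2.
by case: (odd i); case: (odd b) => //=; lia.
Qed.

Lemma le2_0l k : le2 0 k.
Proof. by move=> m; rewrite div0n mod0n. Qed.

Lemma odd_half_subn i b : i <= b -> odd i <= odd b ->
  odd (b - i) = odd b && ~~ odd i /\ (b - i)./2 = b./2 - i./2.
Proof.
rewrite -[b in b - i]odd_double_half -[i in _ - i]odd_double_half.
rewrite -{1}[b]odd_double_half -{1}[i]odd_double_half.
case: (odd b); case: (odd i) => //= le_ib _.
- have -> : 1 + b./2.*2 - (1 + i./2.*2) = false + (b./2 - i./2).*2.
    by rewrite -!muln2; lia.
  by rewrite oddD odd_double half_bit_double.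
- have -> : 1 + b./2.*2 - (0 + i./2.*2) = true + (b./2 - i./2).*2.
    by rewrite -!muln2; lia.
  by rewrite oddD odd_double half_bit_double.
- have -> : 0 + b./2.*2 - (0 + i./2.*2) = false + (b./2 - i./2).*2.
    by rewrite -!muln2; lia.
  by rewrite oddD odd_double half_bit_double.
Qed.

(* [i] and [j] use disjoint sets of binary digits of [b], i.e. [b = i + j + k] with
   [i], [j], [k] binary-disjoint. *)
Definition bin_split b i j := le2 i b /\ le2 j (b - i).

Lemma bin_split_odd_half b i j :
  bin_split b i j <-> odd i + odd j <= odd b /\ bin_split b./2 i./2 j./2.
Proof.
have odd_le (x y z : bool) : x + y <= z -> x <= z by case: x; case: y; case: z.
rewrite /bin_split; split=> [[le_ib le_jbi] | [le_odd [le_ib le_jbi]]].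
- have [le_odd_ib le_ib2] := (le2_odd_half i b).1 le_ib.
  have [odd_bi half_bi] := odd_half_subn (le2_leq le_ib) le_odd_ib.
  case/le2_odd_half: le_jbi; rewrite odd_bi half_bi => le_odd_j le_jbi2.
  split=> //; move: le_odd_ib le_odd_j.
  by case: (odd i); case: (odd j); case: (odd b).
- have le_odd_ib := odd_le _ _ _ le_odd.
  have {}le_ib : le2 i b by apply/le2_odd_half.
  have [odd_bi half_bi] := odd_half_subn (le2_leq le_ib) le_odd_ib.
  split=> //; apply/le2_odd_half; rewrite odd_bi half_bi; split=> //.
  by move: le_odd; case: (odd i); case: (odd j); case: (odd b).
Qed.

Fixpoint bin_splitb n b i j : bool :=
  if n is n'.+1 then (odd i + odd j <= odd b) && bin_splitb n' b./2 i./2 j./2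
  else true.

Lemma ltn_half_exp2S x n : x < 2 ^ n.+1 -> x./2 < 2 ^ n.
Proof. by rewrite ltn_half_double expnSr muln2. Qed.

Lemma bin_splitP n b i j : b < 2 ^ n -> i < 2 ^ n -> j < 2 ^ n ->
  reflect (bin_split b i j) (bin_splitb n b i j).
Proof.
elim: n b i j => [|n IH] b i j.
  rewrite expn0 !ltnS !leqn0 => /eqP-> /eqP-> /eqP->.
  by apply: ReflectT; split; apply: le2_0l.
move=> /ltn_half_exp2S lt_b /ltn_half_exp2S lt_i /ltn_half_exp2S lt_j /=.
apply: (iffP andP); rewrite bin_split_odd_half.
- by case=> le_odd /(IH _ _ _ lt_b lt_i lt_j).
- by case=> le_odd /(IH _ _ _ lt_b lt_i lt_j).
Qed.

Lemma modstar_subn m q : 2 <= q -> q <= m -> modstar m q = modstar (m - (q - 1)) q.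
Proof.
move=> q_ge2 le_qm; rewrite /modstar.
have -> : (m <= q - 1) = false by apply/negbTE; rewrite -ltnNge; lia.
have m_eq : m = (m - (q - 1)) + (q - 1) by lia.
have -> : (m != 0) = true by apply/eqP; lia.
rewrite /= {1 2}m_eq dvdn_addl // modnDr.
case: (ltngtP (m - (q - 1)) (q - 1)) => [lt_mq | lt_qm | ->]; last by rewrite dvdnn.
- by rewrite modn_small //; case: ifP => // /dvdn_leq; lia.
- by have -> : (m - (q - 1) != 0) = true by apply/eqP; lia.
Qed.

Import GRing.Theory.
Local Open Scope ring_scope.

Lemma size_XnsubX (F : fieldType) q : (1 < q)%N -> size ('X^q - 'X : {poly F}) = q.+1.
Proof.
by move=> q_gt1; rewrite size_polyDl size_polyXn // size_polyN size_polyX ltnS.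
Qed.

(* [X^q = X] modulo [X^q - X], so exponents [>= q] drop by [q - 1] until they fall
   in [1, q - 1]; [mod*] returns [q - 1] rather than [0] on positive multiples. *)
Lemma modp_Xn_XnsubX (F : fieldType) q m : (2 <= q)%N ->
  ('X^m : {poly F}) %% ('X^q - 'X) = 'X^(modstar m q).
Proof.
move=> q_ge2; elim/ltn_ind: m => m IH.
case: (leqP m (q - 1)) => [le_mq | lt_qm].
  by rewrite /modstar le_mq modp_small // size_XnsubX // size_polyXn; lia.
have Xm_eq : ('X^m : {poly F}) = 'X^(m - q) * ('X^q - 'X) + 'X^(m - (q - 1)).
  rewrite mulrBr -!exprD -exprSr subnK; last lia.
  have -> : (m - q).+1 = (m - (q - 1))%N by lia.
  by rewrite subrK.
rewrite Xm_eq modpD modp_mull add0r IH; last lia.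
by rewrite -modstar_subn //; lia.
Qed.

Lemma big_ord_double (V : nmodType) m (f : nat -> V) :
  \sum_(i < m.*2) f i = \sum_(i < m) (f i.*2 + f i.*2.+1).
Proof.
elim: m => [|m IH]; first by rewrite !big_ord0.
by rewrite doubleS !big_ord_recr /= IH addrA.
Qed.

Section CharTwo.

Variable F : fieldType.
Hypothesis pcharF2 : (2 \in [pchar F])%N.

Lemma sqr_sum_pchar2 (I : Type) (r : seq I) (f : I -> {poly F}) :
  (\sum_(i <- r) f i) ^+ 2 = \sum_(i <- r) f i ^+ 2.
Proof.
have pchar2 : (2 \in [pchar {poly F}])%N by rewrite pchar_poly.
by rewrite -pFrobenius_autE (rmorph_sum (pFrobenius_aut pchar2)).
Qed.

Variables al be ga : F.
Local Notation phi := (phiPoly al be ga).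

Definition split_term n b i j : {poly F} :=
  ((bin_splitb n b i j)%:R * (al ^+ i * be ^+ j * ga ^+ (b - i - j))) *: 'X^(i.*2 + j).

(* The digit recursion behind [phi^b = phi^(odd b) * (phi^(b/2))^2]: squaring doubles
   [i] and [j], and multiplying by [phi] sets the new low digit of [i], [j] or [b-i-j]. *)
Lemma split_term_sqr n b i j : (i < 2 ^ n)%N -> (j < 2 ^ n)%N -> (b./2 < 2 ^ n)%N ->
  phi ^+ odd b * split_term n b./2 i j ^+ 2 =
  split_term n.+1 b i.*2 j.*2 + split_term n.+1 b i.*2 j.*2.+1 +
  (split_term n.+1 b i.*2.+1 j.*2 + split_term n.+1 b i.*2.+1 j.*2.+1).
Proof.
move=> lt_i lt_j lt_b; rewrite /split_term /= !odd_double !doubleK !uphalf_double /=.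
case split_ij: (bin_splitb n b./2 i j); last first.
  by rewrite !andbF /= !mul0r !scale0r expr0n mulr0 !addr0.
have [/le2_leq le_ib /le2_leq le_jbi] := bin_splitP lt_b lt_i lt_j split_ij.
have b_eq := odd_double_half b.
set k := (b./2 - i - j)%N.
have exp_sqr (R : nzRingType) (x : R) m : x ^+ m.*2 = (x ^+ m) ^+ 2.
  by rewrite -exprM muln2.
have -> : (i.*2.*2 + j.*2 = (i.*2 + j).*2)%N by rewrite doubleD.
have -> : (i.*2.*2 + j.*2.+1 = ((i.*2 + j).*2).+1)%N by rewrite doubleD addnS.
have -> : (i.*2.+1.*2 + j.*2 = ((i.*2 + j).*2).+2)%N by rewrite doubleS doubleD.
case: (odd b) b_eq => /= b_eq.
  have -> : (b - i.*2 - j.*2 = (k.*2).+1)%N by rewrite /k -!muln2; lia.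
  have -> : (b - i.*2 - j.*2.+1 = k.*2)%N by rewrite /k -!muln2; lia.
  have -> : (b - i.*2.+1 - j.*2 = k.*2)%N by rewrite /k -!muln2; lia.
  rewrite ?mul0r ?scale0r ?addr0 !mul1r exprZn !exprS !exp_sqr expr0 mulr1.
  by rewrite -!mul_polyC !(polyCM, rmorphXn) /phiPoly; ring.
have -> : (b - i.*2 - j.*2 = k.*2)%N by rewrite /k -!muln2; lia.
rewrite ?mul0r ?scale0r ?addr0 !mul1r exprZn !exprS !exp_sqr expr0 ?mul1r.
by rewrite -!mul_polyC !(polyCM, rmorphXn); ring.
Qed.

Lemma phiPoly_expn_split n b : (b < 2 ^ n)%N ->
  phi ^+ b = \sum_(i < 2 ^ n) \sum_(j < 2 ^ n) split_term n b i j.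
Proof.
elim: n b => [|n IH] b lt_b.
  move: lt_b; rewrite expn0 ltnS leqn0 => /eqP->.
  by rewrite !big_ord1 /split_term /= !expr0 !mulr1 scale1r.
have lt_b2 := ltn_half_exp2S lt_b.
have -> : phi ^+ b = phi ^+ odd b * (phi ^+ b./2) ^+ 2.
  by rewrite -exprM -exprD muln2 odd_double_half.
rewrite (IH b./2) // sqr_sum_pchar2.
under eq_bigr do rewrite sqr_sum_pchar2.
rewrite mulr_sumr expnSr muln2.
rewrite (big_ord_double _ (fun i => \sum_(j < (2 ^ n).*2) split_term n.+1 b i j)).
apply: eq_bigr => i _; rewrite mulr_sumr.
rewrite (big_ord_double _ (split_term n.+1 b i.*2)).
rewrite (big_ord_double _ (split_term n.+1 b i.*2.+1)) -big_split /=.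
by apply: eq_bigr => j _; apply: split_term_sqr.
Qed.

Lemma restrict_mono_split q a b n : (b < 2 ^ n)%N -> (2 <= q)%N ->
  restrict_mono q a b phi =
  \sum_(i < 2 ^ n) \sum_(j < 2 ^ n)
    ((bin_splitb n b i j)%:R * (al ^+ i * be ^+ j * ga ^+ (b - i - j))) *:
      'X^(modstar (i.*2 + j + a) q).
Proof.
move=> lt_b q_ge2; rewrite /restrict_mono (phiPoly_expn_split lt_b).
have modp_sum := big_morph (fun p : {poly F} => p %% ('X^q - 'X)) (modpD _) (mod0p _).
rewrite mulr_sumr modp_sum; apply: eq_bigr => i _.
rewrite mulr_sumr modp_sum; apply: eq_bigr => j _.
by rewrite /split_term -scalerAr -exprD modpZl modp_Xn_XnsubX // addnC.
Qed.

End CharTwo.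

Lemma vanishing_sum_coef_eq0 (F : finFieldType) n (c : nat -> F) :
  (n <= #|F|)%N -> (forall x, \sum_(i < n) c i * x ^+ i = 0) ->
  forall i, (i < n)%N -> c i = 0.
Proof.
move=> le_nF vanish i lt_in; pose p := \poly_(i < n) c i.
have p_eq0 : p = 0.
  apply: (@roots_geq_poly_eq0 _ p (enum F)).
  - by apply/allP => x _; rewrite /root horner_poly vanish.
  - exact: enum_uniq.
  - by rewrite -cardE (leq_trans (size_poly _ _)).
by have := congr1 (fun p : {poly F} => p`_i) p_eq0; rewrite coef_poly lt_in coef0.
Qed.

Lemma vanishing_sum2_coef_eq0 (F : finFieldType) n (c : nat -> nat -> F) :
  (n <= #|F|)%N ->
  (forall x y, \sum_(i < n) \sum_(j < n) c i j * (x ^+ i * y ^+ j) = 0) ->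
  forall i j, (i < n)%N -> (j < n)%N -> c i j = 0.
Proof.
move=> le_nF vanish i j lt_in lt_jn.
have row_eq0 y : \sum_(j < n) c i j * y ^+ j = 0.
  apply: (@vanishing_sum_coef_eq0 _ _ (fun i => \sum_(j < n) c i j * y ^+ j) le_nF _ i lt_in) => x.
  apply: etrans (vanish x y); apply: eq_bigr => i' _; rewrite mulr_suml.
  by apply: eq_bigr => j' _; ring.
exact: (vanishing_sum_coef_eq0 le_nF row_eq0).
Qed.

Local Close Scope ring_scope.

Section MonomialGoodness.

Variables (F : finFieldType) (l : nat).
Hypotheses (cardF : #|F| = 2 ^ l) (l_gt0 : 0 < l).
Local Notation q := (2 ^ l).

Let pcharF2 : 2 \in [pchar F]%R := card_finPcharP cardF (isT : prime 2).

Let q_ge2 : 2 <= q.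
Proof. by case: l l_gt0 => // l' _; rewrite expnS leq_pmulr ?expn_gt0. Qed.

Lemma mono_good_bin_split r a b : b < q -> mono_good F q r a b ->
  forall i j, le2 i b -> le2 j (b - i) -> modstar (2 * i + j + a) q < q - r.
Proof.
move=> lt_b good i j le_ib le_jbi.
have [lt_i lt_j] : i < q /\ j < q.
  by have := le2_leq le_ib; have := le2_leq le_jbi; split; lia.
rewrite mul2n ltnNge; apply/negP => le_rd.
set d := modstar _ q in le_rd.
pose c i j : F := ((bin_splitb l b i j) && (d == modstar (i.*2 + j + a) q))%:R%R.
have split_ij : bin_splitb l b i j by apply/bin_splitP.
suff : c i j = 0%R by rewrite /c split_ij eqxx /= => /eqP; rewrite oner_eq0.
apply: (@vanishing_sum2_coef_eq0 F q c _ _ i j lt_i lt_j) => [|al be].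
  by rewrite cardF.
have := nth_default 0%R (leq_trans (good al be 1%R) le_rd).
rewrite (restrict_mono_split pcharF2 al be 1%R a lt_b q_ge2) coef_sum => coef_d.
apply: etrans coef_d; apply: eq_bigr => i' _; rewrite coef_sum; apply: eq_bigr => j' _.
by rewrite coefZ coefXn expr1n mulr1 /c -mulnb natrM; ring.
Qed.

Lemma bin_split_mono_good r a b : b < q ->
  (forall i j, le2 i b -> le2 j (b - i) -> modstar (2 * i + j + a) q < q - r) ->
  mono_good F q r a b.
Proof.
move=> lt_b bound al be ga; rewrite (restrict_mono_split pcharF2 al be ga a lt_b q_ge2).
apply: leq_trans (size_sum _ _ _) _; apply/bigmax_leqP => i _.
apply: leq_trans (size_sum _ _ _) _; apply/bigmax_leqP => j _.
case split_ij: (bin_splitb l b i j); last by rewrite mul0r scale0r size_poly0.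
apply: leq_trans (size_scale_leq _ _) _; rewrite size_polyXn.
have [le_ib le_jbi] := bin_splitP lt_b (ltn_ord i) (ltn_ord j) split_ij.
by have := bound _ _ le_ib le_jbi; rewrite mul2n.
Qed.

End MonomialGoodness.

Theorem mainTheorem3 (F : finFieldType) (l : nat) (hF : #|F| = 2 ^ l)
  (r : nat) (hr1 : 1 <= r) (hr2 : r <= 2 ^ l - 1)
  (a b : nat) (ha : a <= 2 ^ l - 1) (hb : b <= 2 ^ l - 1) :
  mono_good F (2 ^ l) r a b <->
  (forall i j : nat, le2 i b -> le2 j (b - i) ->
     modstar (2 * i + j + a) (2 ^ l) < 2 ^ l - r).
Proof.
have l_gt0 : 0 < l by case: l hr2 {hF ha hb} => //; rewrite expn0; lia.
have lt_b : b < 2 ^ l by move: hb (expn_gt0 2 l); lia.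
split; [exact: mono_good_bin_split | exact: bin_split_mono_good].
Qed.
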